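(* Let $\psi(x,y)=\binom{x}{y}$ and let $T$ be the semi-infinite symmetric Pascal matrix $T_{jk}=\binom{j+k}{j}$, $j,k\in\mathbb N$. For $L\in\mathcal F_x(\psi)$, the matrix $\pi(L)$ commutes with $T$ if and only if $L^*\in\mathcal F_x(\psi)$ and $b_\psi(L^* )=b_\psi(L)^*$.
   Context: $\mathbb N=\{0,1,2,\dots\}$; matrix indices start at $0$. Shifts: $(\delta_x f)(x)=f(x+1)$, $(\delta_x^* f)(x)=f(x-1)$ with $f$ extended by $0$ to negative arguments. Difference operators are finite expressions $L=\sum_{k=0}^n a_k(x)\delta_x^k+\sum_{k=1}^n a_{-k}(x)(\delta_x^k)^*$ with $a_k:\mathbb N\to\mathbb R$; $\pi(L)$ is the semi-infinite matrix with $\pi(L)_{x,x+k}=a_k(x)$ (zero elsewhere), so that $\pi(L)$ acting on sequences corresponds to $L$ acting on functions. The anti-involution $*$ on difference operators swaps $\delta$ and $\delta^*$, fixes multiplication operators, and reverses products; it satisfies $\pi(L^* )=\pi(L)^\intercal$. Fourier algebras: $\mathcal F_x(\psi)=\{L(x,\delta_x): L\cdot\psi=R\cdot\psi\text{ for some difference operator }R(y,\delta_y)\}$ (operators in $x$ acting for fixed $y$, in $y$ for fixed $x$), and $b_\psi(L)$ is the unique such $R$. *)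

From HB Require Import structures.
From mathcomp Require Import all_boot all_order all_algebra.
From Stdlib Require Import ClassicalEpsilon.
Set Implicit Arguments. Unset Strict Implicit. Unset Printing Implicit Defensive.
Import Order.TTheory GRing.Theory Num.Theory.
Local Open Scope ring_scope.

(* A difference operator on functions N -> R:
   L = sum_{k=0}^n a_k(x) delta^k + sum_{k=1}^n a_{-k}(x) (delta^k)^*,
   represented by its order bound n and its coefficients a : int -> nat -> R
   (only the offsets -n..n are used). *)
Record diffop (R : Type) := DiffOp { dord : nat; dcoef : int -> nat -> R }.

Section DiffOps.
Variable R : realFieldType.

(* action of L on a function f : N -> R (f extended by 0 to negative args) *)
Definition dact (L : diffop R) (f : nat -> R) (x : nat) : R :=
  \sum_(k < (dord L).+1) dcoef L (k%:Z) x * f (x + k)%N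
  + \sum_(1 <= k < (dord L).+1)
       dcoef L (- (k%:Z)) x * (if (k <= x)%N then f (x - k)%N else 0).

(* the semi-infinite matrix pi(L): pi(L)_{i, i+k} = a_k(i) *)
Definition dmat (L : diffop R) (i j : nat) : R :=
  if ((j <= i + dord L) && (i <= j + dord L))%N
  then dcoef L (j%:Z - i%:Z) i else 0.

Definition opeq (L1 L2 : diffop R) : Prop :=
  forall i j : nat, dmat L1 i j = dmat L2 i j.

(* the anti-involution *: (a(x) delta^k)^* = a(x-k) (delta^k)^*,
   (a(x) (delta^k)^* )^* = a(x+k) delta^k; so the coefficient of offset k
   at x in L^* is a_{-k}(x+k). *)
Definition dstar (L : diffop R) : diffop R :=
  DiffOp (dord L)
    (fun k x => if (0 <= x%:Z + k) then dcoef L (- k) (absz (x%:Z + k)) else 0).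

Definition psi (x y : nat) : R := ('C(x, y))%:R.

Definition in_Fx (L : diffop R) : Prop :=
  exists Rop : diffop R, forall x y : nat,
    dact L (fun x' => psi x' y) x = dact Rop (fun y' => psi x y') y.

Definition zero_op : diffop R := DiffOp 0 (fun _ _ => 0).

(* b_psi(L): the (unique up to opeq) R with L.psi = R.psi *)
Definition b_psi (L : diffop R) : diffop R :=
  match excluded_middle_informative (in_Fx L) with
  | left H => proj1_sig (constructive_indefinite_description _ H)
  | right _ => zero_op
  end.

Definition pascal (j k : nat) : R := ('C(j + k, j))%:R.

(* pi(L) T = T pi(L); the sums are finite since pi(L) is banded
   (pi(L)_{i,j} = 0 unless |i-j| <= dord L). *)
Definition commutes_with_pascal (L : diffop R) : Prop :=
  forall i k : nat,
    \sum_(j < (i + dord L).+1) dmat L i j * pascal j k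
    = \sum_(j < (k + dord L).+1) pascal i j * dmat L j k.

End DiffOps.

(* Write Psi for the binomial matrix Psi_{xy} = binom(x, y), and A, B for the
   banded matrices pi(L), pi(b_psi(L)).  The Fourier relation reads
   A Psi = Psi B^T, Vandermonde's identity reads T = Psi Psi^T, and Psi is
   lower unitriangular, hence cancellable on the left.  If A T = T A then
   Psi B^T Psi^T = Psi Psi^T A, so B^T Psi^T = Psi^T A, i.e. A^T Psi = Psi B:
   this is the Fourier relation of L^* with right-hand side b_psi(L)^*, and
   that relation determines b_psi of L^* uniquely.  Conversely, if
   A^T Psi = Psi B then A T = Psi B^T Psi^T = Psi (A^T Psi)^T = T A. *)
From HB Require Import structures.
From mathcomp Require Import all_boot all_order all_algebra.
From mathcomp Require Import zify ring.
From Stdlib Require Import ClassicalEpsilon.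
Set Implicit Arguments. Unset Strict Implicit. Unset Printing Implicit Defensive.
Import Order.TTheory GRing.Theory Num.Theory.
Local Open Scope ring_scope.

Section BinomialMatrix.
Variable R : realFieldType.
Implicit Types f : nat -> R.

Lemma sum_ord_trunc f K N : (K <= N)%N -> (forall j, (K <= j)%N -> f j = 0) ->
  \sum_(j < N) f j = \sum_(j < K) f j.
Proof.
move=> hKN f0; rewrite -!(big_mkord xpredT) (big_cat_nat (n:=K)) //=.
rewrite [X in _ + X]big1_seq ?addr0 // => j /andP[_].
by rewrite mem_index_iota => /andP[/f0].
Qed.

Lemma sum_ord_supp f b1 b2 :
  (forall j, ((b1 <= j)%N || (b2 <= j)%N) -> f j = 0) ->
  \sum_(j < b1) f j = \sum_(j < b2) f j.
Proof.
move=> f0; have f0' j : (minn b1 b2 <= j)%N -> f j = 0.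
  by move=> ?; apply: f0; lia.
by rewrite (sum_ord_trunc (geq_minl _ _) f0') (sum_ord_trunc (geq_minr _ _) f0').
Qed.

Lemma psi_small a b : (a < b)%N -> psi R a b = 0.
Proof. by move=> ab; rewrite /psi bin_small. Qed.

(* Psi is lower unitriangular: solve for f 0, f 1, ... in turn. *)
Lemma psi_sum_eq0 f N : (forall j, (N <= j)%N -> f j = 0) ->
  (forall x, \sum_(j < N) psi R x j * f j = 0) -> forall j, f j = 0.
Proof.
move=> f0 hsum j; elim/ltn_ind: j => j IH.
case: (leqP N j) => [/f0 // | jN].
rewrite -(hsum j) (bigD1 (Ordinal jN)) //= [psi _ j j]/psi binn mul1r.
rewrite big1 ?addr0 //.
move=> i ij; case: (ltngtP i j) => [/IH -> | /psi_small -> | eij].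
- by rewrite mulr0.
- by rewrite mul0r.
- by case/eqP: ij; apply: val_inj.
Qed.

Lemma pascal_psi_sum j k b : ((j < b) || (k < b))%N ->
  pascal R j k = \sum_(l < b) psi R j l * psi R k l.
Proof.
move=> hb; rewrite /pascal -binomial.Vandermonde natr_sum.
rewrite (reindex_inj rev_ord_inj) /=.
transitivity (\sum_(l < j.+1) psi R j l * psi R k l).
  apply: eq_bigr => l _; have lj : (l <= j)%N by rewrite -ltnS.
  by rewrite natrM /psi subSS subKn // bin_sub.
apply: (@sum_ord_supp (fun l => psi R j l * psi R k l)) => l /orP[jl|bl].
  by rewrite psi_small ?mul0r.
case/orP: hb => [jb|kb].
- by rewrite psi_small ?mul0r //; apply: leq_trans bl.
- by rewrite (psi_small (a:=k)) ?mulr0 //; apply: leq_trans bl.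
Qed.

Lemma sum_pascal_mulr (v : nat -> R) i K N : ((K <= N) || (i < N))%N ->
  \sum_(l < K) pascal R i l * v l
  = \sum_(j < N) psi R i j * \sum_(l < K) psi R l j * v l.
Proof.
move=> hN; under [RHS]eq_bigr do rewrite big_distrr /=.
rewrite exchange_big /=; apply: eq_bigr => l _.
rewrite (@pascal_psi_sum i l N); last first.
  by case/orP: hN => ?; apply/orP; [right; have := ltn_ord l; lia | left].
by rewrite big_distrl /=; apply: eq_bigr => j _; rewrite mulrA.
Qed.

Lemma sum_mulr_pascal (u : nat -> R) k K N : ((K <= N) || (k < N))%N ->
  \sum_(j < K) u j * pascal R j k
  = \sum_(l < N) psi R k l * \sum_(j < K) u j * psi R j l.
Proof.
move=> hN; under [RHS]eq_bigr do rewrite big_distrr /=.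
rewrite exchange_big /=; apply: eq_bigr => j _.
rewrite (@pascal_psi_sum j k N); last first.
  by case/orP: hN => ?; apply/orP; [left; have := ltn_ord j; lia | right].
by rewrite big_distrr /=; apply: eq_bigr => l _; ring.
Qed.

End BinomialMatrix.

Section BandedMatrices.
Variable R : realFieldType.
Implicit Types A B : nat -> nat -> R.

Definition band A n := forall i j, ((i + n < j) || (j + n < i))%N -> A i j = 0.

Definition transp A i j := A j i.

(* A Psi = Psi B^T, each side summed over the support of its terms. *)
Definition intertwines A n B m := forall x y,
  \sum_(j < (x + n).+1) A x j * psi R j y
  = \sum_(j < (y + m).+1) psi R x j * B y j.

Definition pascal_commute A n := forall i k,
  \sum_(j < (i + n).+1) A i j * pascal R j k
  = \sum_(j < (k + n).+1) pascal R i j * A j k.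

Lemma band_transp A n : band A n -> band (transp A) n.
Proof. by move=> hA i j hij; apply: hA; rewrite orbC. Qed.

Lemma intertwines_eq A A' B B' n m m' : band B m -> band B' m' ->
  (forall i j, A i j = A' i j) -> (forall i j, B i j = B' i j) ->
  intertwines A n B m -> intertwines A' n B' m'.
Proof.
move=> hB hB' eA eB hAB x y.
transitivity (\sum_(j < (x + n).+1) A x j * psi R j y).
  by apply: eq_bigr => j _; rewrite eA.
rewrite hAB; under [RHS]eq_bigr do rewrite -eB.
apply: (@sum_ord_supp _ (fun j => psi R x j * B y j)) => j /orP[] hj.
- by rewrite hB ?mulr0 //; apply/orP; left; lia.
- by rewrite eB hB' ?mulr0 //; apply/orP; left; lia.
Qed.

Lemma intertwines_unique A B B' n m m' : band B m -> band B' m' ->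
  intertwines A n B m -> intertwines A n B' m' -> forall y j, B y j = B' y j.
Proof.
move=> hB hB' hAB hAB' y j; apply/eqP; rewrite -subr_eq0; apply/eqP; move: j.
apply: (psi_sum_eq0 (N := (y + m + m').+1)).
  by move=> j hj; rewrite hB ?hB' ?subrr //; apply/orP; left; lia.
move=> x; under eq_bigr do rewrite mulrBr; rewrite sumrB.
rewrite (@sum_ord_trunc _ (fun j => psi R x j * B y j) (y + m).+1); last 2 first.
- lia.
- by move=> j hj; rewrite hB ?mulr0 //; apply/orP; left; lia.
rewrite (@sum_ord_trunc _ (fun j => psi R x j * B' y j) (y + m').+1); last 2 first.
- lia.
- by move=> j hj; rewrite hB' ?mulr0 //; apply/orP; left; lia.
by rewrite -hAB -hAB' subrr.
Qed.

Lemma pascal_commute_intertwines_transp A B n m : band B m ->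
  intertwines A n B m -> pascal_commute A n ->
  intertwines (transp A) n (transp B) m.
Proof.
move=> hB hAB hAT x y; rewrite /transp.
pose K := (x + n).+1; pose N := (x + n + m).+1.
pose D j := \sum_(l < K) psi R x l * B l j - \sum_(l < K) psi R l j * A l x.
have PsiBtPsiT i : \sum_(j < N) psi R i j * \sum_(l < K) psi R x l * B l j
                  = \sum_(j < (i + n).+1) A i j * pascal R j x.
  under eq_bigr do rewrite big_distrr /=.
  rewrite exchange_big /=.
  transitivity
    (\sum_(l < K) psi R x l * \sum_(j < (i + n).+1) A i j * psi R j l).
    apply: eq_bigr => l _; rewrite hAB big_distrr /=.
    under eq_bigr do rewrite mulrCA.
    apply: (@sum_ord_supp _ (fun j => psi R x l * (psi R i j * B l j))) => j hj.
    by rewrite hB ?mulr0 //; apply/orP; left; have := ltn_ord l; lia.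
  by rewrite (@sum_mulr_pascal _ _ _ _ K) // ltnS leq_addr orbT.
have D0 : forall j, D j = 0.
  apply: (psi_sum_eq0 (N := N)).
    move=> j hj; rewrite /D !big1 ?subrr // => l _; have := ltn_ord l.
    + by move=> lK; rewrite psi_small ?mul0r //; lia.
    + by move=> lK; rewrite hB ?mulr0 //; apply/orP; left; lia.
  move=> i; under eq_bigr do rewrite mulrBr; rewrite sumrB PsiBtPsiT hAT.
  apply/eqP; rewrite subr_eq0; apply/eqP.
  apply: (@sum_pascal_mulr _ (fun l => A l x)).
  by apply/orP; left; rewrite /K /N; lia.
have /eqP := D0 y; rewrite subr_eq0 => /eqP D0y.
transitivity (\sum_(l < K) psi R l y * A l x).
  by apply: eq_bigr => l _; rewrite mulrC.
rewrite -D0y.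
apply: (@sum_ord_supp _ (fun j => psi R x j * B j y)) => j /orP[jK|jB].
- by rewrite psi_small ?mul0r //; move: jK; rewrite /K; lia.
- by rewrite hB ?mulr0 //; apply/orP; right; lia.
Qed.

Lemma intertwines_widen A B n m N x y : band B m -> intertwines A n B m ->
  (x < N)%N ->
  \sum_(j < (x + n).+1) A x j * psi R j y = \sum_(j < N) psi R x j * B y j.
Proof.
move=> hB hAB xN; rewrite hAB.
apply: (@sum_ord_supp _ (fun j => psi R x j * B y j)) => j /orP[jB|jN].
- by rewrite hB ?mulr0 //; apply/orP; left; lia.
- by rewrite psi_small ?mul0r //; lia.
Qed.

Lemma intertwines_transp_pascal_commute A B n m : band B m ->
  intertwines A n B m -> intertwines (transp A) n (transp B) m ->
  pascal_commute A n.
Proof.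
move=> hB hAB hABt i k; pose N := (i + k + n + m).+1.
transitivity (\sum_(l < N) psi R k l * \sum_(j < N) psi R i j * B l j).
  rewrite (@sum_mulr_pascal _ (A i) k _ N); last first.
    by apply/orP; right; rewrite /N; lia.
  apply: eq_bigr => l _.
  by rewrite (intertwines_widen (N := N) _ hB hAB) // /N; lia.
transitivity (\sum_(j < N) psi R i j * \sum_(l < N) psi R k l * B l j).
  under eq_bigr do rewrite big_distrr /=.
  rewrite exchange_big /=; apply: eq_bigr => j _; rewrite big_distrr /=.
  by apply: eq_bigr => l _; ring.
rewrite (@sum_pascal_mulr _ (fun j => A j k) i _ N); last first.
  by apply/orP; left; rewrite /N; lia.
apply: eq_bigr => j _; congr (_ * _).
rewrite -(intertwines_widen (N := N) _ (band_transp hB) hABt) /N; last lia.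
by apply: eq_bigr => l _; rewrite mulrC.
Qed.

End BandedMatrices.

Section DifferenceOperators.
Variable R : realFieldType.
Implicit Types L Q : diffop R.

Lemma band_dmat L : band (dmat L) (dord L).
Proof. by rewrite /dmat => i j hij; case: ifP => // /andP[]; lia. Qed.

Lemma dmat_dstar L i j : dmat (dstar L) i j = dmat L j i.
Proof.
rewrite /dmat /= andbC; case: ifP => // _.
have -> : i%:Z + (j%:Z - i%:Z) = j%:Z by lia.
by rewrite opprB.
Qed.

Lemma dactE L f x :
  dact L f x = \sum_(j < (x + dord L).+1) dmat L x j * f j.
Proof.
rewrite /dact -(big_mkord xpredT (fun j => dmat L x j * f j)).
rewrite [RHS](big_cat_nat (n := x)) ?leqW ?leq_addr //=.
rewrite addrC; congr (_ + _).
  rewrite (big_addn 0 _ x) -addnS addKn big_mkord.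
  apply: eq_bigr => k _; have := ltn_ord k; rewrite /dmat => kn.
  rewrite ifT; last by apply/andP; split; lia.
  by congr (dcoef L _ x * f _); lia.
rewrite big_add1 [RHS]big_nat_rev /=.
rewrite (big_nat_widen _ _ (x + dord L)) ?leq_addl //.
rewrite [RHS](big_nat_widen _ _ (x + dord L)) ?leq_addr //.
rewrite big_mkcond [RHS]big_mkcond /=.
apply: eq_big_nat => k _; rewrite /dmat.
case: (ltnP k x) => kx; case: (ltnP k (dord L)) => kn /=.
- rewrite ifT; last by apply/andP; split; lia.
  by congr (dcoef L _ x * f _); lia.
- by case: ifP => [/andP[]|_]; [lia | rewrite mul0r].
- by rewrite mulr0.
- by [].
Qed.

Lemma dact_psiP L Q :
  (forall x y, dact L (fun x' => psi R x' y) x = dact Q (fun y' => psi R x y') y)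
  <-> intertwines (dmat L) (dord L) (dmat Q) (dord Q).
Proof.
have dact_psi_r x y : dact Q (fun y' => psi R x y') y
    = \sum_(j < (y + dord Q).+1) psi R x j * dmat Q y j.
  by rewrite dactE; apply: eq_bigr => j _; rewrite mulrC.
by split=> hLQ x y; move: (hLQ x y); rewrite dactE dact_psi_r.
Qed.

Lemma b_psi_intertwines L : in_Fx L ->
  intertwines (dmat L) (dord L) (dmat (b_psi L)) (dord (b_psi L)).
Proof.
rewrite /b_psi => hL; case: excluded_middle_informative => // hL'.
exact/dact_psiP/(proj2_sig (constructive_indefinite_description _ hL')).
Qed.

End DifferenceOperators.

Theorem mainTheorem4 (R : realFieldType) (L : diffop R) :
  in_Fx L ->
  (commutes_with_pascal L <->
   (in_Fx (dstar L) /\ opeq (b_psi (dstar L)) (dstar (b_psi L)))).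
Proof.
move=> hL; have hLQ := b_psi_intertwines hL; set Q := b_psi L in hLQ *.
have hBQ := @band_dmat _ Q; have hBQ' := @band_dmat _ (dstar Q).
split=> [hC | [hFx hb]].
- have hS : intertwines (dmat (dstar L)) (dord L) (dmat (dstar Q)) (dord Q).
    apply: (intertwines_eq (band_transp hBQ) hBQ' _ _
             (pascal_commute_intertwines_transp hBQ hLQ hC)) => i j.
    + by rewrite dmat_dstar.
    + by rewrite dmat_dstar.
  have hFx : in_Fx (dstar L) by exists (dstar Q); apply/dact_psiP.
  have hB' := @band_dmat _ (b_psi (dstar L)).
  split=> // i j.
  exact: intertwines_unique hB' hBQ' (b_psi_intertwines hFx) hS i j.
- have hB' := @band_dmat _ (b_psi (dstar L)).
  apply: (intertwines_transp_pascal_commute hBQ hLQ).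
  apply: (intertwines_eq hB' (band_transp hBQ) _ _ (b_psi_intertwines hFx))
    => i j.
  + by rewrite dmat_dstar.
  + by rewrite hb dmat_dstar.
Qed.
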